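(* Let $S$ be an entropy function for a finite set $X$, let $X'\subset X$, and let $R$ be a new element not in $X$, with $Y:=X'\cup\{R\}$. Define $T$ on $2^Y$ by $T(A):=S(A)$ and $T(A\cup\{R\}):=S(A\cup(X\setminus X'))$ for all $A\subseteq X'$. Then $T$ is an entropy function for $Y$. Moreover, for any EDF $f$ for $S$, the function $g:Y\to\mathbb R$ given by $g(x)=f(x)$ for $x\in X'$ and $g(R)=\sum_{x\in X\setminus X'}f(x)$ is an EDF for $T$.
   Context: An entropy function for a finite set $X$ is a function $S:2^X\to[0,\infty)$ with $S(\emptyset)=0$, $S(A)+S(B)\ge S(A\cap B)+S(A\cup B)$ and $S(A)+S(B)\ge S(A\setminus B)+S(B\setminus A)$ for all $A,B\subseteq X$. An entanglement distribution function (EDF) for $S$ is a function $f:X\to\mathbb R$ with $\big|\sum_{x\in A}f(x)\big|\le S(A)$ for all $A\subseteq X$. *)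

From HB Require Import structures.
From mathcomp Require Import all_boot all_order all_algebra.
Set Implicit Arguments. Unset Strict Implicit. Unset Printing Implicit Defensive.
Import Order.TTheory GRing.Theory Num.Theory.
Local Open Scope ring_scope.

Definition entropy_function (R : realFieldType) (X : finType)
  (S : {set X} -> R) : Prop :=
  [/\ S set0 = 0,
      (forall A, 0 <= S A),
      (forall A B, S (A :&: B) + S (A :|: B) <= S A + S B) &
      (forall A B, S (A :\: B) + S (B :\: A) <= S A + S B)].

Definition EDF (R : realFieldType) (X : finType) (S : {set X} -> R)
  (f : X -> R) : Prop :=
  forall A : {set X}, `|\sum_(x in A) f x| <= S A.

Definition subX (X : finType) (X' : {set X}) : finType := {x : X | x \in X'}.

(* Y := X' ∪ {R}: the new element R is [None], x ∈ X' is [Some x]. *)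
Definition Yty (X : finType) (X' : {set X}) : finType := option (subX X').

Definition inX' (X : finType) (X' : {set X}) (B : {set Yty X'}) : {set X} :=
  [set x in X' | [exists y : subX X', (val y == x) && (Some y \in B)]].

(* T(A) = S(A),  T(A ∪ {R}) = S(A ∪ (X \ X'))  for A ⊆ X'. *)
Definition Tfun (R : realFieldType) (X : finType) (S : {set X} -> R)
  (X' : {set X}) (B : {set Yty X'}) : R :=
  S (inX' B :|: (if None \in B then ~: X' else set0)).

Definition gfun (R : realFieldType) (X : finType) (f : X -> R)
  (X' : {set X}) (y : Yty X') : R :=
  match y with
  | Some x => f (val x)
  | None => \sum_(x in ~: X') f x
  end.

Arguments Tfun {R X} S X' B.
Arguments gfun {R X} f X' y.

From mathcomp Require Import all_boot all_order all_algebra.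
Set Implicit Arguments. Unset Strict Implicit. Unset Printing Implicit Defensive.
Import Order.TTheory GRing.Theory Num.Theory.
Local Open Scope ring_scope.

(* Let [h : X -> Y] map [X'] identically and collapse [X \ X'] to the new
   point [R].  Then [T] is the pullback [B |-> S (h^-1 B)] of [S] and [g] is
   the pushforward [y |-> sum of f over h^-1 y] of [f].  Preimages commute
   with intersection, union and difference, so pulling back preserves the
   entropy axioms; and the sum of [g] over [B] is the sum of [f] over
   [h^-1 B], so the EDF bound for [g] is that of [f] at [h^-1 B]. *)

Section Pullback.
Variables (R : realFieldType) (X Y : finType) (h : X -> Y) (S : {set X} -> R).

Lemma entropy_function_preimset (T : {set Y} -> R) :
  (forall B, T B = S (h @^-1: B)) ->
  entropy_function S -> entropy_function T.
Proof.
move=> TE [S0 S_ge0 S_submod S_diff]; split=> [|A|A B|A B]; rewrite !TE.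
- by rewrite preimset0.
- exact: S_ge0.
- by rewrite preimsetI preimsetU.
- by rewrite !preimsetD.
Qed.

Lemma sum_preimset (f : X -> R) (B : {set Y}) :
  \sum_(x in h @^-1: B) f x = \sum_(y in B) \sum_(x | h x == y) f x.
Proof.
rewrite (partition_big h (mem B)) => [|x]; last by rewrite inE.
apply: eq_bigr => y yB; apply: eq_bigl => x; rewrite inE.
by rewrite andb_idl // => /eqP ->.
Qed.

Lemma EDF_preimset (T : {set Y} -> R) (f : X -> R) (g : Y -> R) :
  (forall B, T B = S (h @^-1: B)) ->
  (forall y, g y = \sum_(x | h x == y) f x) ->
  EDF S f -> EDF T g.
Proof.
move=> TE gE fS B; rewrite TE (eq_bigr _ (fun y _ => gE y)) -sum_preimset.
exact: fS.
Qed.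

End Pullback.

Section Collapse.
Variables (X : finType) (X' : {set X}).

Definition collapse : X -> Yty X' := insub.

Lemma Tfun_preimset (R : realFieldType) (S : {set X} -> R) (B : {set Yty X'}) :
  Tfun S X' B = S (collapse @^-1: B).
Proof.
congr S; apply/setP => x; rewrite /inX' /collapse !inE.
case: insubP => [y xX' yx | /negPf xX'] /=; last first.
  by case: (None \in B); rewrite !inE xX'.
have -> : [exists z, (val z == x) && (Some z \in B)] = (Some y \in B).
  apply/existsP/idP => [[z /andP [/eqP zx]] | yB]; last by exists y; rewrite yx eqxx.
  by have -> : z = y by apply: val_inj; rewrite zx yx.
by case: (None \in B); rewrite !inE xX' ?orbF.
Qed.

Lemma gfun_fibre (R : realFieldType) (f : X -> R) (y : Yty X') :
  gfun f X' y = \sum_(x | collapse x == y) f x.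
Proof.
rewrite /collapse; case: y => [y|] /=.
  rewrite (big_pred1 (val y)) // => x /=.
  case: insubP => [z _ <- | xX'] /=; first by rewrite (inj_eq val_inj).
  by apply/esym/eqP => xy; rewrite xy (valP y) in xX'.
by apply: eq_bigl => x; rewrite inE; case: insubP => [z -> | /negPf ->].
Qed.

End Collapse.

Theorem proposition23 (R : realFieldType) (X : finType) (S : {set X} -> R)
  (X' : {set X}) :
  entropy_function S ->
  entropy_function (Tfun S X') /\
  (forall f : X -> R, EDF S f -> EDF (Tfun S X') (gfun f X')).
Proof.
move=> S_entropy; split; first exact: entropy_function_preimset (Tfun_preimset S) S_entropy.
by move=> f; apply: EDF_preimset (Tfun_preimset S) (gfun_fibre f).
Qed.
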